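(* For the iterates of ARDCA (context) and every $k\ge0$, $$u^{k+1}=\frac{\theta_k}{\theta_0}z^{k+1}+\theta_k\sum_{t=1}^k\left(\frac{\theta_t(1-\theta_0)^{k-t}}{\theta_{t-1}^2}-\frac{(1-\theta_0)^{k+1-t}}{\theta_{t-1}}\right)u^t,$$ where each coefficient $\frac{\theta_t(1-\theta_0)^{k-t}}{\theta_{t-1}^2}-\frac{(1-\theta_0)^{k+1-t}}{\theta_{t-1}}$ ($1\le t\le k$) is positive and $$\frac{\theta_k}{\theta_0}+\theta_k\sum_{t=1}^k\left(\frac{\theta_t(1-\theta_0)^{k-t}}{\theta_{t-1}^2}-\frac{(1-\theta_0)^{k+1-t}}{\theta_{t-1}}\right)=1.$$
   Context: $\widehat n\ge1$ is an integer; $\theta_0=1/\widehat n$, $\theta_{k+1}=\frac{\sqrt{\theta_k^4+4\theta_k^2}-\theta_k^2}{2}$ (so $\frac{1-\theta_k}{\theta_k^2}=\frac1{\theta_{k-1}^2}$, with convention $1/\theta_{-1}^2=\widehat n^2-\widehat n$). ARDCA generates vectors in $\mathbb{R}^{\widehat n}$ by: $z^0=u^0$; for $k\ge0$, $v^k=\theta_kz^k+(1-\theta_k)u^k$; $z^{k+1}$ differs from $z^k$ in at most one coordinate $i_k$ (chosen at random, with $z^{k+1}_{i_k}$ given by a coordinate proximal step on the dual objective); $u^{k+1}=v^k+\widehat n\theta_k(z^{k+1}-z^k)$. (The identity only uses the relations $z^0=u^0$, $v^k=\theta_kz^k+(1-\theta_k)u^k$, $u^{k+1}=v^k+\widehat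 n\theta_k(z^{k+1}-z^k)$ and the definition of $\theta_k$.) *)

From HB Require Import structures.
From mathcomp Require Import all_boot all_order all_algebra.
From mathcomp Require Import reals.
Set Implicit Arguments. Unset Strict Implicit. Unset Printing Implicit Defensive.
Import Order.TTheory GRing.Theory Num.Theory.
Local Open Scope ring_scope.

Fixpoint ardca_theta (R : realType) (nhat : nat) (k : nat) : R :=
  match k with
  | O => 1 / nhat%:R
  | S k' => let th := ardca_theta R nhat k' in
            (Num.sqrt (th ^+ 4 + 4 * th ^+ 2) - th ^+ 2) / 2
  end.

Definition ardca_coef (R : realType) (nhat k t : nat) : R :=
  let th := ardca_theta R nhat in
  th t * (1 - th 0%N) ^+ (k - t) / (th t.-1) ^+ 2
  - (1 - th 0%N) ^+ (k.+1 - t) / th t.-1.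

Definition ardca_iterates (R : realType) (nhat : nat)
    (z u v : nat -> 'rV[R]_nhat) : Prop :=
  let th := ardca_theta R nhat in
  z 0%N = u 0%N /\
  (forall k, v k = th k *: z k + (1 - th k) *: u k) /\
  (forall k, exists i : 'I_nhat, forall j : 'I_nhat, j != i -> z k.+1 0 j = z k 0 j) /\
  (forall k, u k.+1 = v k + (nhat%:R * th k) *: (z k.+1 - z k)).

From HB Require Import structures.
From mathcomp Require Import all_boot all_order all_algebra.
From mathcomp Require Import reals.
From mathcomp Require Import ring lra.
Import Order.TTheory GRing.Theory Num.Theory.
Local Open Scope ring_scope.

(** The recursion for [theta] says [1 - theta_(k+1) = theta_(k+1)^2 / theta_k^2],
    and [nhat theta_k = theta_k / theta_0].  The identity is linear and holds
    coordinatewise, so it suffices to prove it for scalar sequences, by induction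
    on [k]: the induction hypothesis expresses [z^(k+1)] through [u^(k+1)] and the
    previous combination [S_k], and substituting it into the update of [u^(k+2)]
    yields [S_(k+1) = (1 - theta_0) S_k + c_(k+1,k+1) u^(k+1)], which is exactly
    how the coefficients [c_(k,t)] evolve with [k].  The coefficients sum to the
    right value because [z = u = 1] satisfies the iteration.  For positivity,
    [c_(k,t) = (1 - theta_0)^(k-t) (theta_t - (1 - theta_0) theta_(t-1)) / theta_(t-1)^2],
    and [((1 - theta_0) theta_(t-1))^2 < (1 - theta_t) theta_(t-1)^2 = theta_t^2]
    because [theta_t < theta_0]. *)

Arguments ardca_theta : simpl never.

Lemma sqrt_quad_root {R : rcfType} (X : R) : 0 < X ->
  let y := (Num.sqrt (X ^+ 2 + 4 * X) - X) / 2 in 0 < y /\ y ^+ 2 = (1 - y) * X.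
Proof.
move=> X_gt0 /=; set s := Num.sqrt _.
have s_ge0 : 0 <= s := sqrtr_ge0 _.
have s_sqr : s ^+ 2 = X ^+ 2 + 4 * X by rewrite sqr_sqrtr //; nra.
split; nra.
Qed.

Section ArdcaTheta.
Context {R : realType} {nhat : nat}.
Hypothesis nhat_gt0 : (0 < nhat)%N.
Local Notation th := (ardca_theta R nhat).
Local Notation coef := (ardca_coef R nhat).

Lemma ardca_theta0 : th 0 = nhat%:R^-1.
Proof. exact: div1r. Qed.

Lemma ardca_thetaS k :
  th k.+1 = (Num.sqrt (th k ^+ 2 ^+ 2 + 4 * th k ^+ 2) - th k ^+ 2) / 2.
Proof. by rewrite -exprM. Qed.

Lemma ardca_theta_gt0 k : 0 < th k.
Proof.
elim: k => [|k IH]; first by rewrite ardca_theta0 invr_gt0 ltr0n.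
by rewrite ardca_thetaS; case: (sqrt_quad_root _ (exprn_gt0 2 IH)).
Qed.

Lemma ardca_theta_neq0 k : th k != 0.
Proof. by rewrite gt_eqF ?ardca_theta_gt0. Qed.

Lemma ardca_theta_sqrS k : th k.+1 ^+ 2 = (1 - th k.+1) * th k ^+ 2.
Proof.
by rewrite ardca_thetaS; case: (sqrt_quad_root _ (exprn_gt0 2 (ardca_theta_gt0 k))).
Qed.

Lemma ardca_theta_ltS k : th k.+1 < th k.
Proof.
have thk_gt0 := ardca_theta_gt0 k; have th1_gt0 := ardca_theta_gt0 k.+1.
have sqr_lt : th k.+1 ^+ 2 < th k ^+ 2.
  by rewrite ardca_theta_sqrS gtr_pMl ?exprn_gt0 // gtrBl.
by rewrite -(ltr_pXn2r (isT : (0 < 2)%N)) // nnegrE ltW.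
Qed.

Lemma ardca_theta_lt0 t : (0 < t)%N -> th t < th 0.
Proof.
move=> t_gt0; apply: (homo_ltn (r := fun x y => y < x)) t_gt0 => [y x w yx wy|i].
  exact: lt_trans wy yx.
exact: ardca_theta_ltS.
Qed.

Lemma ardca_theta0_le1 : th 0 <= 1.
Proof. by rewrite ardca_theta0 invf_le1 ?ler1n ?ltr0n. Qed.

Lemma ardca_theta_gt_contraction k : (1 - th 0) * th k < th k.+1.
Proof.
have th0_le1 := ardca_theta0_le1; have th1_lt_th0 := ardca_theta_lt0 _ (ltn0Sn k).
have thk_gt0 := ardca_theta_gt0 k; have th1_gt0 := ardca_theta_gt0 k.+1.
have sqr_lt : ((1 - th 0) * th k) ^+ 2 < th k.+1 ^+ 2.
  rewrite ardca_theta_sqrS exprMn ltr_pM2r ?exprn_gt0 //; nra.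
have lhs_ge0 : 0 <= (1 - th 0) * th k by rewrite mulr_ge0 ?subr_ge0 // ltW.
by rewrite -(ltr_pXn2r (isT : (0 < 2)%N)) // nnegrE // ltW.
Qed.

Lemma ardca_coefE k t : (t <= k)%N ->
  coef k t = (1 - th 0) ^+ (k - t) * ((th t - (1 - th 0) * th t.-1) / th t.-1 ^+ 2).
Proof.
move=> t_le_k; rewrite /ardca_coef (subSn t_le_k) [_ ^+ (k - t).+1]exprS.
by field; apply: ardca_theta_neq0.
Qed.

Lemma ardca_coef_diag k : coef k k = (th k - (1 - th 0) * th k.-1) / th k.-1 ^+ 2.
Proof. by rewrite ardca_coefE // subnn mul1r. Qed.

Lemma ardca_coefS k t : (t <= k)%N -> coef k.+1 t = (1 - th 0) * coef k t.
Proof. by move=> t_le_k; rewrite !ardca_coefE ?(leqW t_le_k) // subSn // exprS mulrA. Qed.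

Lemma ardca_coef_gt0 k t : (1 < nhat)%N -> (0 < t <= k)%N -> 0 < coef k t.
Proof.
move=> nhat_gt1 /andP[t_gt0 t_le_k]; rewrite ardca_coefE //.
have th0_lt1 : th 0 < 1 by rewrite ardca_theta0 invf_lt1 ?ltr1n ?ltr0n.
rewrite mulr_gt0 ?exprn_gt0 ?subr_gt0 // divr_gt0 ?exprn_gt0 ?ardca_theta_gt0 //.
by case: t t_gt0 {t_le_k} => // t _; rewrite subr_gt0 ardca_theta_gt_contraction.
Qed.

Lemma ardca_comb_recr (x : nat -> R) k :
  \sum_(1 <= t < k.+2) coef k.+1 t * x t
  = (1 - th 0) * \sum_(1 <= t < k.+1) coef k t * x t + coef k.+1 k.+1 * x k.+1.
Proof.
rewrite big_nat_recr //= mulr_sumr; congr (_ + _).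
by apply: eq_big_nat => t /andP[_ t_le_k]; rewrite ardca_coefS // mulrA.
Qed.

Lemma ardca_expansion (z u : nat -> R) :
  z 0 = u 0 ->
  (forall k, u k.+1 = th k * z k + (1 - th k) * u k + nhat%:R * th k * (z k.+1 - z k)) ->
  forall k, u k.+1 = th k / th 0 * z k.+1 + th k * \sum_(1 <= t < k.+1) coef k t * u t.
Proof.
rewrite -[nhat%:R]invrK -ardca_theta0 => z0 u_next.
have th_neq0 := ardca_theta_neq0.
elim=> [|k IH].
  by rewrite big_geq // u_next z0; field.
rewrite ardca_comb_recr ardca_coef_diag /= u_next.
move: IH; set S := \sum_(_ <= _ < _) _ => IH.
have z_eq : z k.+1 = th 0 / th k * (u k.+1 - th k * S).
  by rewrite IH; field; rewrite !th_neq0.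
have one_sub : 1 - th k.+1 = th k.+1 ^+ 2 / th k ^+ 2.
  by rewrite ardca_theta_sqrS; field; rewrite th_neq0.
by rewrite z_eq one_sub; field; rewrite !th_neq0.
Qed.

End ArdcaTheta.

Theorem lemma9 (R : realType) (nhat : nat) (z u v : nat -> 'rV[R]_nhat) :
  (1 <= nhat)%N ->
  ardca_iterates z u v ->
  forall k : nat,
    u k.+1 = (ardca_theta R nhat k / ardca_theta R nhat 0) *: z k.+1
             + ardca_theta R nhat k *: \sum_(1 <= t < k.+1) ardca_coef R nhat k t *: u t
    /\ ((2 <= nhat)%N -> forall t : nat, (1 <= t <= k)%N -> 0 < ardca_coef R nhat k t)
    /\ ardca_theta R nhat k / ardca_theta R nhat 0
       + ardca_theta R nhat k * \sum_(1 <= t < k.+1) ardca_coef R nhat k t = 1.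
Proof.
move=> nhat_gt0 [z0 [v_def [_ u_next]]] k; split; [|split].
- apply/rowP => j; rewrite !mxE summxE; under eq_bigr do rewrite mxE.
  apply: (ardca_expansion nhat_gt0 (fun i => z i 0 j) (fun i => u i 0 j)) => [|i].
    by rewrite z0.
  by rewrite u_next v_def !mxE.
- by move=> nhat_gt1 t; apply: ardca_coef_gt0.
- have const_iterates i : 1 = ardca_theta R nhat i * 1 + (1 - ardca_theta R nhat i) * 1
                              + nhat%:R * ardca_theta R nhat i * (1 - 1).
    by ring.
  have := ardca_expansion nhat_gt0 (fun=> 1) (fun=> 1) erefl const_iterates k.
  by rewrite mulr1; under eq_bigr do rewrite mulr1; move/esym.
Qed.
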